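(* Fix $t\in\{1,\dots,M\}$, corresponding to the pair $(i,j)$ with $C_t=C_{i,j}$, and let $z^*=(x^*,y^* )\in F(\mathcal{T}_t)$. Define $$r_t=\begin{cases}\min\Big\{d_{sep}(z^*,C_t),\ \dfrac{d_{sep}(z^*,C_t)+d_{esc}(z^*,C_t)}{2}\Big\}, & \text{if } |K_t(z^* )|=1,\\[2mm] \min\{g(x_i^*,x_j^*,w_i,w_j),\ g(y_i^*,y_j^*,h_i,h_j)\}, & \text{if } |K_t(z^* )|=2,\end{cases}$$ where $g(a,b,c,d)=|(a-b)+(c-d)/2|/\sqrt{2}$. Then every $z\in B(z^*,r_t)$ satisfies $K_t(z)\subseteq K_t(z^* )$.
   Context: Fix reals $W,H>0$, integers $N\ge N_m\ge 2$, and widths $w_i>0$, heights $h_i>0$ for $1\le i\le N_m$. Points of $\mathbb{R}^{2N}$ are written $z=(x,y)$ with $x=(x_1,\dots,x_N)$, $y=(y_1,\dots,y_N)$. For $1\le i\le N_m$ let $B_i^x=\{z: 0\le x_i\le W-w_i\}$, $B_i^y=\{z: 0\le y_i\le H-h_i\}$; for $i\neq j$ let $B_{i,j}=B_i^x\cap B_i^y\cap B_j^x\cap B_j^y$, $O^x_{i,j}=\{z: x_i+w_i\le x_j\}$, $O^y_{i,j}=\{z: y_i+h_i\le y_j\}$. Define the closed convex sets $C_{i,j,\mathsf{L}}=O^x_{i,j}\cap B_{i,j}$, $C_{i,j,\mathsf{R}}=O^x_{j,i}\cap B_{i,j}$, $C_{i,j,\mathsf{B}}=O^y_{i,j}\cap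 B_{i,j}$, $C_{i,j,\mathsf{A}}=O^y_{j,i}\cap B_{i,j}$ (assumed nonempty) and $C_{i,j}=C_{i,j,\mathsf{L}}\cup C_{i,j,\mathsf{R}}\cup C_{i,j,\mathsf{B}}\cup C_{i,j,\mathsf{A}}$. Enumerate the pairs $1\le i<j\le N_m$ by $t=1,\dots,M$ and write $C_t=C_{i,j}$, $C_{t,k}=C_{i,j,k}$. With the Euclidean norm and $\mathrm{d}(z,C)=\inf_{c\in C}\|z-c\|$: $\mathcal{P}_t(z)=\{c\in C_t:\|z-c\|=\mathrm{d}(z,C_t)\}$, $P_{t,k}(z)$ is the unique nearest point of $C_{t,k}$ to $z$; for a fixed $\lambda\in(0,2)$, $\mathcal{T}_t(z)=\{z+\lambda(p-z):p\in\mathcal{P}_t(z)\}$, $F(\mathcal{T}_t)=\{z: z\in\mathcal{T}_t(z)\}$. Active indices: $K_t(z)=\{k\in\{\mathsf{L},\mathsf{R},\mathsf{B},\mathsf{A}\}: P_{t,k}(z)\in\mathcal{P}_t(z)\}$ (for $z^*\in F(\mathcal{T}_t)$ one has $|K_t(z^* )|\in\{1,2\}$). $d_{esc}(z^*,C_t)=\inf\{\|z-z^*\| : z\notin C_{t,k}\text{ for some }k\in K_t(z^* )\}$; $d_{sep}(z^*,C_t)=\min\{\mathrm{d}(z^*,C_{t,k}) : k\notin K_t(z^* )\}$. $B(z,r)$ is the open Euclidean ball (empty if $r=0$). *)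

From mathcomp Require Import all_boot all_order all_algebra.
From mathcomp Require Import all_classical all_reals.
Set Implicit Arguments. Unset Strict Implicit. Unset Printing Implicit Defensive.
Import Order.TTheory GRing.Theory Num.Theory.
Local Open Scope classical_set_scope.
Local Open Scope ring_scope.

(* A point z = (x, y) of R^{2N}; coordinates are indexed by 'I_N (0-based). *)
Definition pt (R : realType) (N : nat) : Type := (('I_N -> R) * ('I_N -> R))%type.

Definition edist (R : realType) (N : nat) (z c : pt R N) : R :=
  Num.sqrt (\sum_(k < N) ((z.1 k - c.1 k) ^+ 2 + (z.2 k - c.2 k) ^+ 2)).

Definition dset (R : realType) (N : nat) (z : pt R N) (C : set (pt R N)) : R :=
  inf [set edist z c | c in C].

Inductive side := sL | sR | sB | sA.

Section Sets.
Variables (R : realType) (N : nat) (W H : R) (w h : 'I_N -> R) (i j : 'I_N).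

Definition Bx (l : 'I_N) : set (pt R N) := [set z | 0 <= z.1 l /\ z.1 l <= W - w l].
Definition By (l : 'I_N) : set (pt R N) := [set z | 0 <= z.2 l /\ z.2 l <= H - h l].
Definition Bij : set (pt R N) := Bx i `&` By i `&` Bx j `&` By j.
Definition Ox (a b : 'I_N) : set (pt R N) := [set z | z.1 a + w a <= z.1 b].
Definition Oy (a b : 'I_N) : set (pt R N) := [set z | z.2 a + h a <= z.2 b].

Definition Cside (k : side) : set (pt R N) :=
  match k with
  | sL => Ox i j `&` Bij
  | sR => Ox j i `&` Bij
  | sB => Oy i j `&` Bij
  | sA => Oy j i `&` Bij
  end.

Definition Cpair : set (pt R N) :=
  Cside sL `|` Cside sR `|` Cside sB `|` Cside sA.

Definition Pset (z : pt R N) : set (pt R N) :=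
  [set c | Cpair c /\ edist z c = dset z Cpair].

Definition is_Pk (k : side) (z p : pt R N) : Prop :=
  Cside k p /\ forall c, Cside k c -> edist z p <= edist z c.

Definition Kset (z : pt R N) : set side :=
  [set k | exists p, is_Pk k z p /\ Pset z p].

Definition relax (lam : R) (z p : pt R N) : pt R N :=
  (fun l => z.1 l + lam * (p.1 l - z.1 l), fun l => z.2 l + lam * (p.2 l - z.2 l)).

Definition Tset (lam : R) (z : pt R N) : set (pt R N) :=
  [set relax lam z p | p in Pset z].
Definition is_fixed (lam : R) (z : pt R N) : Prop := Tset lam z z.

Definition d_esc (zs : pt R N) : R :=
  inf [set edist z zs | z in [set z | exists k, Kset zs k /\ ~ Cside k z]].

Definition d_sep (zs : pt R N) : R :=
  inf [set dset zs (Cside k) | k in ~` Kset zs].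

End Sets.

Definition gfun (R : realType) (a b c d : R) : R :=
  `|(a - b) + (c - d) / 2| / Num.sqrt 2.

Definition has_card1 (K : set side) : Prop := exists k, K = [set k].
Definition has_card2 (K : set side) : Prop :=
  exists k1 k2, k1 <> k2 /\ K = [set k1; k2].

From Pilot Require Import Defs.
From mathcomp Require Import all_boot all_order all_algebra.
From mathcomp Require Import all_classical all_reals.
From mathcomp Require Import ring lra.
Import Order.TTheory GRing.Theory Num.Theory.
Set Implicit Arguments. Unset Strict Implicit. Unset Printing Implicit Defensive.
Local Open Scope classical_set_scope.
Local Open Scope ring_scope.

(* A fixed point [zs] of the relaxed projection lies in [C_t], and every active
   index [k] at [zs] has [zs] in [C_{t,k}]; a point [z] at distance [r] from [zs]
   whose nearest point [p] in [C_t] lies in an inactive piece is refuted by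
   exhibiting a point of an active piece strictly closer to [z] than [p].

   If one piece is active, [|z - p| >= d_sep - r], while the point of the
   segment [[zs, z]] at distance slightly above [2 r - d_sep] from [zs] stays in
   the active piece (it is closer than [d_esc] to [zs]) and is at distance
   [< d_sep - r] from [z].

   If two pieces are active, one constrains the [x]-pair and the other the
   [y]-pair, so an inactive piece is the opposite of an active one, say [R] of
   [L].  In the [(x_i, x_j)]-plane rotated by 45 degrees, [L] becomes a triangle
   above the line [V = (w_i + w_j) / 2], [R] lies below [V = - (w_i + w_j) / 2],
   and [g] is the distance of [zs] to the midline [V = 0].  Every point of the
   disc of radius [g] around [zs] is strictly closer to the triangle than to the
   lower half-plane, so moving the pair [(p.x_i, p.x_j)] into the triangle gives
   a closer point of [C_t]. *)

Section EuclideanDistance.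
Variables (R : realType) (I : finType).
Implicit Types f g : I -> R.

Definition sqdist f g : R := \sum_k (f k - g k) ^+ 2.

Definition dist f g : R := Num.sqrt (sqdist f g).

Lemma sum_sqr_ge0 f : 0 <= \sum_k f k ^+ 2.
Proof. by apply: sumr_ge0 => k _; apply: sqr_ge0. Qed.

Lemma sum_sqr_le0 f : \sum_k f k ^+ 2 <= 0 -> forall k, f k = 0.
Proof.
move=> le0 k; have /psumr_eq0P f0 : \sum_k f k ^+ 2 = 0.
  by apply/eqP; rewrite eq_le le0 sum_sqr_ge0.
by apply/eqP; rewrite -sqrf_eq0 f0 // => l _; apply: sqr_ge0.
Qed.

Lemma sqdist_ge0 f g : 0 <= sqdist f g.
Proof. exact: sum_sqr_ge0. Qed.

Lemma dist_ge0 f g : 0 <= dist f g.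
Proof. exact: sqrtr_ge0. Qed.

Lemma distC f g : dist f g = dist g f.
Proof. by congr Num.sqrt; apply: eq_bigr => k _; rewrite -sqrrN opprB. Qed.

Lemma dist_eq0 f g : dist f g = 0 -> f = g.
Proof.
move/eqP; rewrite sqrtr_eq0 => /(@sum_sqr_le0 (fun k => f k - g k)) fg0.
by apply: funext => k; apply/eqP; rewrite -subr_eq0 fg0.
Qed.

Lemma dist_scale f g f' g' (t : R) :
  (forall k, f k - g k = t * (f' k - g' k)) -> dist f g = `|t| * dist f' g'.
Proof.
move=> fg; rewrite /dist /sqdist -sqrtr_sqr -sqrtrM ?sqr_ge0 // mulr_sumr.
by congr Num.sqrt; apply: eq_bigr => k _; rewrite fg exprMn.
Qed.

Lemma CauchySchwarz f g :
  \sum_k f k * g k <= Num.sqrt (\sum_k f k ^+ 2) * Num.sqrt (\sum_k g k ^+ 2).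
Proof.
set A := \sum_k f k ^+ 2; set B := \sum_k g k ^+ 2; set s := _ * _.
have sA : Num.sqrt A ^+ 2 = A by rewrite sqr_sqrtr ?sum_sqr_ge0.
have sB : Num.sqrt B ^+ 2 = B by rewrite sqr_sqrtr ?sum_sqr_ge0.
have s0 : 0 <= s by rewrite mulr_ge0 ?sqrtr_ge0.
(* AM-GM on each pair [f k * sqrt B], [g k * sqrt A] *)
have amgm : 2 * (\sum_k f k * g k) * s <= 2 * s ^+ 2.
  have -> : 2 * s ^+ 2 = \sum_k (f k ^+ 2 * B + g k ^+ 2 * A).
    by rewrite /s exprMn sA sB big_split -!mulr_suml /= -/A -/B; ring.
  rewrite mulr_sumr mulr_suml; apply: ler_sum => k _.
  have := sqr_ge0 (f k * Num.sqrt B - g k * Num.sqrt A).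
  by rewrite sqrrB !exprMn sA sB /s; lra.
have [s_gt0|s_le0] := ltrP 0 s.
  by move: amgm; rewrite expr2 mulrA ler_pM2r //; lra.
have /orP[] : (Num.sqrt A == 0) || (Num.sqrt B == 0).
  by rewrite -mulf_eq0 eq_le s_le0 s0.
- rewrite sqrtr_eq0 => /sum_sqr_le0 f0.
  by rewrite big1 // => k _; rewrite f0 mul0r.
- rewrite sqrtr_eq0 => /sum_sqr_le0 g0.
  by rewrite big1 // => k _; rewrite g0 mulr0.
Qed.

Lemma Minkowski f g :
  Num.sqrt (\sum_k (f k + g k) ^+ 2) <=
  Num.sqrt (\sum_k f k ^+ 2) + Num.sqrt (\sum_k g k ^+ 2).
Proof.
have sqrD : \sum_k (f k + g k) ^+ 2 =
    \sum_k f k ^+ 2 + 2 * (\sum_k f k * g k) + \sum_k g k ^+ 2.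
  by rewrite mulr_sumr -!big_split; apply: eq_bigr => k _ /=; ring.
rewrite -[leRHS]ger0_norm ?addr_ge0 ?sqrtr_ge0 // -sqrtr_sqr.
rewrite ler_sqrt ?sqr_ge0 // sqrD sqrrD !sqr_sqrtr ?sum_sqr_ge0 //.
by have := CauchySchwarz f g; lra.
Qed.

Lemma dist_triangle f g h : dist f h <= dist f g + dist g h.
Proof.
rewrite /dist /sqdist.
under eq_bigr => k _ do rewrite -(subrKA (g k)).
exact: Minkowski.
Qed.

End EuclideanDistance.

Section PointDistance.
Variables (R : realType) (N : nat).
Implicit Types z c p : pt R N.

Definition coords z : 'I_N + 'I_N -> R :=
  fun k => match k with inl l => z.1 l | inr l => z.2 l end.

Lemma sqdist_coords z c :
  sqdist (coords z) (coords c) = sqdist z.1 c.1 + sqdist z.2 c.2.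
Proof. exact: big_sumType. Qed.

Lemma edistE z c : edist z c = dist (coords z) (coords c).
Proof. by rewrite /dist sqdist_coords /sqdist -big_split. Qed.

Lemma edist_ge0 z c : 0 <= edist z c.
Proof. by rewrite edistE dist_ge0. Qed.

Lemma edistC z c : edist z c = edist c z.
Proof. by rewrite !edistE distC. Qed.

Lemma edist_eq0 z c : edist z c = 0 -> z = c.
Proof.
rewrite edistE => /dist_eq0 zc.
by case: z c zc => [x y] [x' y'] zc; congr pair; apply: funext => l;
  [exact: (congr1 (fun f => f (inl l)) zc) | exact: (congr1 (fun f => f (inr l)) zc)].
Qed.

Lemma edist_xx z : edist z z = 0.
Proof.
by rewrite edistE /dist /sqdist big1 ?sqrtr0 // => k _; rewrite subrr expr0n.
Qed.

Lemma edist_triangle z c p : edist z p <= edist z c + edist c p.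
Proof. rewrite !edistE; exact: dist_triangle. Qed.

Lemma edist_lt z c p :
  sqdist z.1 c.1 + sqdist z.2 c.2 < sqdist z.1 p.1 + sqdist z.2 p.2 ->
  edist z c < edist z p.
Proof.
rewrite !edistE /dist -!sqdist_coords => lt.
by rewrite ltr_sqrt // (le_lt_trans (sqdist_ge0 _ _) lt).
Qed.

Lemma edist_relax_l t z p : edist (relax t z p) z = `|t| * edist p z.
Proof. by rewrite !edistE; apply: dist_scale => -[] l /=; ring. Qed.

Lemma edist_relax_r t z p : edist p (relax t z p) = `|1 - t| * edist p z.
Proof. by rewrite !edistE; apply: dist_scale => -[] l /=; ring. Qed.

Lemma relax_fixed t z p : t != 0 -> relax t z p = z -> p = z.
Proof.
move=> t0 /(congr1 (fun u => edist u z)); rewrite edist_relax_l edist_xx.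
by move/eqP; rewrite mulf_eq0 normr_eq0 (negbTE t0) => /eqP /edist_eq0.
Qed.

Lemma dset_ge0 z (C : set (pt R N)) : 0 <= dset z C.
Proof.
have [[c Cc]|C0] := pselect (C !=set0).
  by apply: lb_le_inf => [|_ [c' _ <-]]; [exists (edist z c), c | exact: edist_ge0].
rewrite /dset (_ : C = set0) ?image_set0 ?inf0 //.
by apply/seteqP; split => // c Cc; apply: C0; exists c.
Qed.

Lemma dset_le z (C : set (pt R N)) c : C c -> dset z C <= edist z c.
Proof.
move=> Cc; apply: ge_inf; last by exists c.
by exists 0 => _ [c' _ <-]; exact: edist_ge0.
Qed.

Lemma edist_lt_gfun z zs a b u v : edist z zs < gfun a b u v ->
  2 * sqdist z.1 zs.1 < (a - b + (u - v) / 2) ^+ 2 /\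
  2 * sqdist z.2 zs.2 < (a - b + (u - v) / 2) ^+ 2.
Proof.
rewrite /gfun => lt; have e0 := edist_ge0 z zs.
have : edist z zs ^+ 2 < (`|a - b + (u - v) / 2| / Num.sqrt 2) ^+ 2 by nra.
rewrite edistE /dist sqr_sqrtr ?sqdist_ge0 // sqdist_coords.
rewrite expr_div_n real_normK ?num_real // sqr_sqrtr // => lt2.
have := sqdist_ge0 z.1 zs.1; have := sqdist_ge0 z.2 zs.2.
by split; lra.
Qed.

End PointDistance.

Section Plane.
Variable R : realFieldType.

Lemma triangle_closer_than_halfplane (M S U V u v : R) :
  0 < M -> M <= V -> V <= U -> U + V <= S ->
  (u - U) ^+ 2 + (v - V) ^+ 2 < V ^+ 2 ->
  exists Uc Vc, [/\ M <= Vc, Vc <= Uc, Uc + Vc <= S &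
    forall Uq Vq, Vq <= - M ->
      (u - Uc) ^+ 2 + (v - Vc) ^+ 2 < (u - Uq) ^+ 2 + (v - Vq) ^+ 2].
Proof.
move=> M0 MV VU UVS disc.
have [sqU0 sqV0] := (sqr_ge0 (u - U), sqr_ge0 (v - V)).
have v0 : 0 < v.
  rewrite ltNge; apply/negP => v_le0.
  have : 0 <= v * (v - 2 * V) by nra.
  nra.
suff [Uc [Vc [? ? ? lt]]] : exists Uc Vc, [/\ M <= Vc, Vc <= Uc, Uc + Vc <= S &
    (u - Uc) ^+ 2 + (v - Vc) ^+ 2 < (v + M) ^+ 2].
  by exists Uc, Vc; split => // Uq Vq Vq_le; have := sqr_ge0 (u - Uq); nra.
(* the triangle is symmetric under [U |-> S - U] *)
wlog u_le : u U VU UVS disc sqU0 / 2 * u <= S.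
  move=> gen; have [u_le|u_gt] := lerP (2 * u) S; first exact: (gen u U).
  have disc' : (S - u - (S - U)) ^+ 2 + (v - V) ^+ 2 < V ^+ 2 by lra.
  have [Uc [Vc [? ? ? lt]]] :=
    gen (S - u) (S - U) ltac:(lra) ltac:(lra) disc' (sqr_ge0 _) ltac:(lra).
  by exists (S - Uc), Vc; split; lra.
have u0 : 0 < u.
  rewrite ltNge; apply/negP => u_le0.
  have : V ^+ 2 <= (u - U) ^+ 2 by nra.
  nra.
have [v_lt|M_le_v] := ltrP v M.
  have [u_lt|M_le_u] := ltrP u M.
    exists M, M; split; try lra.
    have sq_le : (M - u) ^+ 2 <= (U - u - (V - M)) ^+ 2.
      by rewrite ler_sqr ?nnegrE; lra.
    have sq_lt : (U - u - (V - M)) ^+ 2 < 2 * V * v - v ^+ 2 - (V - M) ^+ 2.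
      have : (V - M) ^+ 2 <= (U - u) * (V - M) by nra.
      nra.
    have := sqr_ge0 (V - M - v); nra.
  by exists u, M; split; nra.
have [v_le|v_gt] := lerP (2 * v) S.
  have [u_lt|v_le_u] := ltrP u v.
    by exists v, v; split; nra.
  by exists u, v; split; nra.
by exists (S / 2), (S / 2); split; nra.
Qed.

(* In the coordinates [U = x1 + x2 - d], [V = x2 - x1 - d], [d = (wa - wb) / 2],
   the constraints on [(c1, c2)] describe the triangle of
   [triangle_closer_than_halfplane] and [q2 + wb <= q1] the half-plane
   [V <= - (wa + wb) / 2]. *)
Lemma before_closer_than_after (L wa wb a1 a2 p1 p2 : R) :
  0 < wa -> 0 < wb -> 0 <= a1 -> a2 <= L - wb -> a1 + wa <= a2 ->
  2 * ((p1 - a1) ^+ 2 + (p2 - a2) ^+ 2) < (a1 - a2 + (wa - wb) / 2) ^+ 2 ->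
  exists c1 c2, [/\ 0 <= c1, c2 <= L - wb, c1 + wa <= c2 &
    forall q1 q2, q2 + wb <= q1 ->
      (p1 - c1) ^+ 2 + (p2 - c2) ^+ 2 < (p1 - q1) ^+ 2 + (p2 - q2) ^+ 2].
Proof.
move=> wa0 wb0 a1_ge0 a2_le a12 disc; set d := (wa - wb) / 2.
have [|||||Uc [Vc [? ? ? closer]]] := @triangle_closer_than_halfplane
  ((wa + wb) / 2) (2 * L - wa - wb) (a1 + a2 - d) (a2 - a1 - d)
  (p1 + p2 - d) (p2 - p1 - d); rewrite /d; try lra.
exists ((Uc - Vc) / 2), ((Uc + Vc) / 2 + d); split; rewrite /d; try lra.
move=> q1 q2 q12; have := closer (q1 + q2 - d) (q2 - q1 - d) ltac:(rewrite /d; lra).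
by rewrite /d; lra.
Qed.

End Plane.

Section Strip.
Variables (R : realType) (I : finType) (L : R) (w : I -> R).
Implicit Types f g : I -> R.

Definition inside (a b : I) f : Prop :=
  [/\ 0 <= f a, f a <= L - w a, 0 <= f b & f b <= L - w b].

Definition left_of (a b : I) f : Prop := inside a b f /\ f a + w a <= f b.

Lemma sqdist_split2 f g (a b : I) : a != b ->
  sqdist f g = (f a - g a) ^+ 2 + (f b - g b) ^+ 2 +
    \sum_(k | (k != a) && (k != b)) (f k - g k) ^+ 2.
Proof.
move=> ab; rewrite /sqdist (bigD1 a) //= (bigD1 b) /=; last by rewrite eq_sym.
by rewrite addrA.
Qed.

Lemma left_of_closer (a b : I) (fz fs fq : I -> R) :
  a != b -> 0 < w a -> 0 < w b -> left_of a b fs -> fq b + w b <= fq a ->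
  2 * sqdist fz fs < (fs a - fs b + (w a - w b) / 2) ^+ 2 ->
  exists2 fc, left_of a b fc & sqdist fz fc < sqdist fz fq.
Proof.
move=> ab wa0 wb0 [[fsa0 _ _ fsbL] fsab] fqba disc.
have rest_ge0 : 0 <= \sum_(k | (k != a) && (k != b)) (fz k - fs k) ^+ 2.
  by apply: sumr_ge0 => k _; apply: sqr_ge0.
have [|c1 [c2 [c1_ge0 c2_le c12 closer]]] :=
  before_closer_than_after wa0 wb0 fsa0 fsbL fsab (p1 := fz a) (p2 := fz b).
  by move: disc; rewrite (sqdist_split2 _ _ ab); lra.
pose fc k := if k == a then c1 else if k == b then c2 else fq k.
have [fca fcb] : fc a = c1 /\ fc b = c2 by rewrite /fc eqxx eq_sym (negbTE ab) eqxx.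
exists fc; first by split; [split|]; rewrite ?fca ?fcb; lra.
rewrite !(sqdist_split2 _ _ ab) fca fcb.
have -> : \sum_(k | (k != a) && (k != b)) (fz k - fc k) ^+ 2 =
          \sum_(k | (k != a) && (k != b)) (fz k - fq k) ^+ 2.
  by apply: eq_bigr => k /andP[ka kb]; rewrite /fc (negbTE ka) (negbTE kb).
by have := closer _ _ fqba; lra.
Qed.

End Strip.

Section Segment.
Variables (R : realType) (N : nat).

Lemma closer_point_in_ball (C : set (pt R N)) (zs z : pt R N) (ds de : R) :
  C zs -> (forall c, edist c zs < de -> C c) ->
  edist z zs < ds -> 2 * edist z zs < ds + de ->
  exists2 c, C c & edist z c < ds - edist z zs.
Proof.
set r := edist z zs => Czs near r_lt r2_lt.
have [small|big] := ltrP (2 * r) ds; first by exists zs; rewrite // -/r; lra.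
have r0 : 0 < r by have := edist_ge0 zs zs; lra.
set tau := (2 * r - ds + Num.min de r) / 2.
have [tau_de tau_r tau_gt] : [/\ tau < de, tau < r & 2 * r - ds < tau].
  by rewrite /tau; case: (lerP de r) => ?; split; lra.
have th0 : 0 <= tau / r by rewrite divr_ge0; lra.
have th1 : tau / r <= 1 by rewrite ler_pdivrMr //; lra.
exists (relax (tau / r) zs z).
  by apply: near; rewrite edist_relax_l ger0_norm // -/r divfK ?gt_eqF.
by rewrite edist_relax_r ger0_norm ?subr_ge0 // -/r mulrBl mul1r divfK ?gt_eqF //; lra.
Qed.

End Segment.

Definition opp (k : side) : side :=
  match k with sL => sR | sR => sL | sB => sA | sA => sB end.

Lemma side_cases (k1 k2 k : side) : k1 <> k2 -> k2 <> opp k1 ->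
  k <> k1 -> k <> k2 -> k = opp k1 \/ k = opp k2.
Proof. by case: k1; case: k2; case: k; auto. Qed.

Lemma gfunC (R : realType) (a b u v : R) : gfun a b u v = gfun b a v u.
Proof. by rewrite /gfun -normrN; congr (`|_| / _); ring. Qed.

Section Pair.
Variables (R : realType) (N : nat) (W H : R) (w h : 'I_N -> R) (i j : 'I_N).
Local Notation Cside := (Cside W H w h i j).
Local Notation Cpair := (Cpair W H w h i j).
Local Notation Pset := (Pset W H w h i j).
Local Notation Kset := (Kset W H w h i j).

Lemma CsideE k (z : pt R N) : Cside k z <->
  match k with
  | sL => left_of W w i j z.1 /\ inside H h i j z.2
  | sR => left_of W w j i z.1 /\ inside H h i j z.2
  | sB => inside W w i j z.1 /\ left_of H h i j z.2
  | sA => inside W w i j z.1 /\ left_of H h j i z.2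
  end.
Proof.
rewrite /left_of /inside.
by case: k; rewrite /= /Defs.Bij /Bx /By /Ox /Oy /=; split; firstorder.
Qed.

Lemma Cside_Cpair k (z : pt R N) : Cside k z -> Cpair z.
Proof.
by case: k => Cz; [left; left; left | left; left; right | left; right | right].
Qed.

Lemma Pset_le (z p c : pt R N) : Pset z p -> Cpair c -> edist z p <= edist z c.
Proof. by move=> [_ ->]; apply: dset_le. Qed.

Lemma fixed_Cpair lam (zs : pt R N) : lam != 0 ->
  is_fixed W H w h i j lam zs -> Cpair zs.
Proof. by move=> lam0 [p [Cp _] /(relax_fixed lam0) <-]. Qed.

Lemma Kset_Cside (zs : pt R N) k : Cpair zs -> Kset zs k -> Cside k zs.
Proof.
move=> Czs [p [[Ckp _] Pp]]; suff -> : zs = p by [].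
apply: edist_eq0; apply/eqP; rewrite eq_le edist_ge0 andbT.
by have := Pset_le Pp Czs; rewrite edist_xx.
Qed.

Lemma d_sep_le (zs : pt R N) k : ~ Kset zs k ->
  d_sep W H w h i j zs <= dset zs (Cside k).
Proof.
move=> nKk; apply: ge_inf; last by exists k.
by exists 0 => _ [k' _ <-]; exact: dset_ge0.
Qed.

Lemma d_esc_le (zs c : pt R N) k : Kset zs k -> ~ Cside k c ->
  d_esc W H w h i j zs <= edist c zs.
Proof.
move=> Kk nCc; apply: ge_inf; last by exists c => //; exists k.
by exists 0 => _ [c' _ <-]; exact: edist_ge0.
Qed.

Lemma Kset_sub_card1 (zs z : pt R N) k0 : Cpair zs -> Kset zs = [set k0] ->
  edist z zs < Num.min (d_sep W H w h i j zs)
                 ((d_sep W H w h i j zs + d_esc W H w h i j zs) / 2) ->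
  Kset z `<=` Kset zs.
Proof.
set ds := d_sep W H w h i j zs; set de := d_esc W H w h i j zs.
move=> Czs Ke; rewrite lt_min => /andP[r_ds r_mid] k [p [[Ckp _] Pp]].
rewrite Ke; apply: contrapT => /= nk.
have Kk0 : Kset zs k0 by rewrite Ke.
have near : forall c, edist c zs < de -> Cside k0 c.
  by move=> c c_de; apply: contrapT => nCc; have := d_esc_le Kk0 nCc; lra.
have r2 : 2 * edist z zs < ds + de by lra.
have [c Ck0c cz] := closer_point_in_ball (Kset_Cside Czs Kk0) near r_ds r2.
have ds_p : ds <= edist zs p.
  by apply: le_trans (dset_le _ Ckp); apply: d_sep_le; rewrite Ke.
have := edist_triangle zs z p; have := Pset_le Pp (Cside_Cpair Ck0c).
by rewrite (edistC zs z); lra.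
Qed.

Hypotheses (ij : i != j) (wi : 0 < w i) (wj : 0 < w j) (hi : 0 < h i) (hj : 0 < h j).

Lemma Cside_opp k (z : pt R N) : Cside k z -> Cside (opp k) z -> False.
Proof.
by case: k => -[+ _] [+ _]; rewrite /Ox /Oy /=; move: (wi) (wj) (hi) (hj); lra.
Qed.

Lemma Cside_opp_closer k (zs z p : pt R N) : Cside k zs -> Cside (opp k) p ->
  edist z zs < Num.min (gfun (zs.1 i) (zs.1 j) (w i) (w j))
                       (gfun (zs.2 i) (zs.2 j) (h i) (h j)) ->
  exists2 c, Cside k c & edist z c < edist z p.
Proof.
move=> Czs Cp; rewrite lt_min => /andP[rx ry].
have [[gx _] [_ gy]] := (edist_lt_gfun rx, edist_lt_gfun ry).
rewrite gfunC in rx; rewrite gfunC in ry.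
have [[gx' _] [_ gy']] := (edist_lt_gfun rx, edist_lt_gfun ry).
have ji : j != i by rewrite eq_sym.
move: Czs Cp; rewrite !CsideE; case: k => -[zsx zsy] [px py].
- have [fc ? lt] := left_of_closer ij wi wj zsx px.2 gx.
  by exists (fc, p.2); [rewrite CsideE | apply: edist_lt => /=; lra].
- have [fc ? lt] := left_of_closer ji wj wi zsx px.2 gx'.
  by exists (fc, p.2); [rewrite CsideE | apply: edist_lt => /=; lra].
- have [fc ? lt] := left_of_closer ij hi hj zsy py.2 gy.
  by exists (p.1, fc); [rewrite CsideE | apply: edist_lt => /=; lra].
- have [fc ? lt] := left_of_closer ji hj hi zsy py.2 gy'.
  by exists (p.1, fc); [rewrite CsideE | apply: edist_lt => /=; lra].
Qed.

Lemma Kset_sub_card2 (zs z : pt R N) k1 k2 : Cpair zs ->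
  k1 <> k2 -> Kset zs = [set k1; k2] ->
  edist z zs < Num.min (gfun (zs.1 i) (zs.1 j) (w i) (w j))
                       (gfun (zs.2 i) (zs.2 j) (h i) (h j)) ->
  Kset z `<=` Kset zs.
Proof.
move=> Czs k12 Ke rz k [p [[Ckp _] Pp]].
have Ck1 : Cside k1 zs by apply: Kset_Cside; rewrite // Ke; left.
have Ck2 : Cside k2 zs by apply: Kset_Cside; rewrite // Ke; right.
have k2_opp : k2 <> opp k1 by move=> e; apply: (Cside_opp Ck1); rewrite -e.
rewrite Ke; apply: contrapT => nk.
have nk1 : k <> k1 by move=> e; apply: nk; left.
have nk2 : k <> k2 by move=> e; apply: nk; right.
have [c Cc cz] : exists2 c, Cpair c & edist z c < edist z p.
  have [ek|ek] := side_cases k12 k2_opp nk1 nk2; rewrite ek in Ckp.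
  - by have [c /Cside_Cpair] := Cside_opp_closer Ck1 Ckp rz; exists c.
  - by have [c /Cside_Cpair] := Cside_opp_closer Ck2 Ckp rz; exists c.
by have := Pset_le Pp Cc; lra.
Qed.

End Pair.

Theorem mainTheorem7 (R : realType) (N Nm : nat) (W H lam : R)
  (w h : 'I_N -> R) (i j : 'I_N)
  (hW : 0 < W) (hH : 0 < H) (hNm : (2 <= Nm)%N) (hNNm : (Nm <= N)%N)
  (hw : forall l : 'I_N, (l < Nm)%N -> 0 < w l)
  (hh : forall l : 'I_N, (l < Nm)%N -> 0 < h l)
  (hlam : 0 < lam /\ lam < 2)
  (hij : (i < j)%N) (hjNm : (j < Nm)%N)
  (hne : forall k : side, Cside W H w h i j k !=set0) :
  forall zs : pt R N, is_fixed W H w h i j lam zs ->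
  (has_card1 (Kset W H w h i j zs) ->
     forall z : pt R N,
       edist z zs < Num.min (d_sep W H w h i j zs)
                      ((d_sep W H w h i j zs + d_esc W H w h i j zs) / 2) ->
       Kset W H w h i j z `<=` Kset W H w h i j zs) /\
  (has_card2 (Kset W H w h i j zs) ->
     forall z : pt R N,
       edist z zs < Num.min (gfun (zs.1 i) (zs.1 j) (w i) (w j))
                            (gfun (zs.2 i) (zs.2 j) (h i) (h j)) ->
       Kset W H w h i j z `<=` Kset W H w h i j zs).
Proof.
move=> zs fixed_zs.
have Czs := fixed_Cpair (lt0r_neq0 hlam.1) fixed_zs.
have ij : i != j by rewrite neq_ltn hij.
have iNm : (i < Nm)%N := ltn_trans hij hjNm.
split => [[k0 Ke] | [k1 [k2 [k12 Ke]]]] z rz.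
- exact: Kset_sub_card1 Czs Ke rz.
- exact: (Kset_sub_card2 ij (hw i iNm) (hw j hjNm) (hh i iNm) (hh j hjNm)
          Czs k12 Ke rz).
Qed.
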